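(* A tournament $G$ does not have a subtournament isomorphic to $D_4$ if and only if $G$ can be written as $T_n(I^1,\ldots,I^n)$ or as $I_2(T_n(I^1,\ldots,I^n), I)$, where $n \ge 1$ is odd, $I_2$ is taken with its standard ordering of vertices, and $I^1,\ldots,I^n,I$ are transitive tournaments.
   Context: A tournament is a finite, non-null, loopless directed graph in which for any two distinct vertices $u,v$ there is exactly one edge with both ends in $\{u,v\}$; write $u\to v$ for the edge from $u$ to $v$, and $X\Rightarrow Y$ if $x\to y$ for all $x\in X,y\in Y$. A subtournament is the tournament induced on a nonempty vertex subset. A tournament is transitive if its vertices can be ordered $v_1,\dots,v_n$ with $v_i\to v_j$ whenever $i<j$ (the standard ordering); $I_n$ denotes the transitive tournament on $n$ vertices. Substitution: given a tournament $G$ with an ordering $v_1,\dots,v_n$ of its vertices and tournaments $H_1,\dots,H_n$, $G(H_1,\dots,H_n)$ is a tournament whose vertex set is a disjoint union $V_1\cup\dots\cup V_n$, with $V_i\Rightarrow V_j$ whenever $v_i\to v_j$ and the subtournament on $V_i$ isomorphic to $H_i$. For $n=2k+1$, $T_n$ is the tournament on $v_1,\dots,v_n$ (ordered in this way for substitution) with $v_i\to v_j$ iff $j\equiv i+1,\dots,i+k \pmod n$. $D_4$ is the 4-vertex tournament consisting of a cyclic triangle $C$ and a vertex $v$ with $v\to c$ for every vertex $c$ of $C$. *)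

From mathcomp Require Import all_boot.
Set Implicit Arguments. Unset Strict Implicit. Unset Printing Implicit Defensive.

Definition is_tournament (V : finType) (e : rel V) : Prop :=
  0 < #|V| /\ (forall x, ~~ e x x) /\ (forall x y, x != y -> e x y != e y x).

Definition has_sub_iso (W V : finType) (eH : rel W) (eG : rel V) : Prop :=
  exists f : W -> V, injective f /\ forall x y, eG (f x) (f y) = eH x y.

(* D_4 on 'I_4: vertices 0,1,2 form the cyclic triangle 0->1->2->0,
   vertex 3 dominates them. *)
Definition d4 : rel 'I_4 := fun x y =>
  ((x == 3 :> nat) && (y != 3 :> nat)) ||
  [&& x < 3, y < 3 & (y == (x + 1) %% 3 :> nat)].

(* T_n on 'I_n (vertices v_1..v_n as 0..n-1): i -> j iff
   j = i+1, ..., i+k (mod n), with n = 2k+1. *)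
Definition tn (n : nat) : rel 'I_n := fun i j =>
  (0 < (j + n - i) %% n) && ((j + n - i) %% n <= n./2).

Definition transitive_on (V : finType) (e : rel V) (S : {set V}) : Prop :=
  exists s : seq V, [/\ uniq s, s =i S &
    forall (x0 : V) (i j : nat), i < j -> j < size s ->
      e (nth x0 s i) (nth x0 s j)].

(* The subtournament induced on S is T_n(I^1, ..., I^n) with transitive
   I^i: S splits into n nonempty parts V_1..V_n (f x = part of x) such that
   V_i => V_j whenever v_i -> v_j in T_n, and each part is transitive. *)
Definition Tn_subst (V : finType) (e : rel V) (S : {set V}) (n : nat) : Prop :=
  exists f : V -> 'I_n,
    [/\ forall i : 'I_n, exists2 x, x \in S & f x = i,
        forall i : 'I_n, transitive_on e [set x in S | f x == i] &
        forall x y, x \in S -> y \in S -> f x != f y ->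
          e x y = tn (f x) (f y)].

From mathcomp Require Import all_boot zify.
Set Implicit Arguments. Unset Strict Implicit. Unset Printing Implicit Defensive.

(** Fix a vertex x of a D_4-free tournament in which every vertex has an
   out-neighbour. Its out-neighbourhood C is transitive because x dominates it.
   Its in-neighbourhood B is transitive too: the common out-neighbours of a
   cyclic triangle of B form a nonempty set that is closed under out-edges and
   transitive, so its sink would be a sink of the whole tournament. Each c in C
   beats an initial segment of the transitive order of B, of a length that
   grows along C; grouping C by these lengths and B by the resulting cut points
   gives the 2k+1 parts of T_(2k+1)(I^1,...,I^(2k+1)). If instead some vertex is
   a sink, removing it and recursing makes it the bottom of the transitive
   tournament I. Conversely, in T_n(I^1,...,I^n) every out-neighbourhood is
   transitive: it is ordered by the clockwise distance of parts, then inside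
   each part. *)

Definition tn_nat k i j := ((i < j) && (j - i <= k)) || ((j < i) && (k < i - j)).

Lemma tn_odd n (i j : 'I_n) : odd n -> tn i j = tn_nat n./2 i j.
Proof.
move=> odd_n; rewrite /tn /tn_nat; have hn : n = (n./2).*2.+1 by lia.
move: (n./2) hn => k hn; have hi := ltn_ord i; have hj := ltn_ord j.
case: (leqP i j) => hij.
  have -> : j + n - i = (j - i) + n by lia.
  rewrite modnDr modn_small; last by lia.
  by case: (ltngtP i j) => h; lia.
by rewrite modn_small; last lia; case: (ltngtP i j) => h; lia.
Qed.

Lemma tn_nat_asym k i j : tn_nat k i j -> ~~ tn_nat k j i.
Proof. rewrite /tn_nat; lia. Qed.

Definition cdist n a b := if a <= b then b - a else b + n - a.

Lemma cdist_le_tn n a b : odd n -> a < n -> b < n ->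
  tn_nat n./2 a b -> cdist n a b <= n./2.
Proof.
by move=> odd_n ha hb; rewrite /tn_nat /cdist => /orP [/andP [h1 h2]|/andP [h1 h2]];
  [rewrite ifT|rewrite ifF]; lia.
Qed.

Lemma cdist_mono_tn n a b c : odd n -> a < n -> b < n -> c < n -> tn_nat n./2 b c ->
  cdist n a b <= n./2 -> cdist n a c <= n./2 -> cdist n a b <= cdist n a c.
Proof.
move=> odd_n ha hb hc; rewrite /tn_nat /cdist => /orP [/andP [h1 h2]|/andP [h1 h2]];
  case: (leqP a b) => h3; case: (leqP a c) => h4; lia.
Qed.

Lemma cdist_inj n a b c : a < n -> b < n -> c < n -> cdist n a b = cdist n a c -> b = c.
Proof. by move=> ha hb hc; rewrite /cdist; case: (leqP a b) => h3; case: (leqP a c) => h4; lia. Qed.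

Section PositiveRank.
Variable P : pred nat.

Definition prank x := count P (iota 1 x).

Lemma prankS x : prank x.+1 = prank x + P x.+1.
Proof. by rewrite /prank -[x.+1]addn1 iotaD count_cat /= add1n addn0 addn1. Qed.

Lemma prank_mono : {homo prank : x y / x <= y}.
Proof.
move=> x y /subnKC <-; elim: (y - x) => [|d IH]; first by rewrite addn0.
by rewrite addnS prankS (leq_trans IH) // leq_addr.
Qed.

Lemma prank_ltE p x : 0 < p -> P p -> (x < p) = (prank x < prank p).
Proof.
move=> p_gt0 Pp; case: (ltnP x p) => hxp.
  have -> : prank p = (prank p.-1).+1.
    by rewrite -{1}(prednK p_gt0) prankS prednK // Pp addn1.
  by rewrite ltnS prank_mono // -ltnS prednK.
by apply/esym/negbTE; rewrite -leqNgt; apply: prank_mono.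
Qed.

Lemma prank_surj m t : 0 < t <= prank m ->
  exists p, [/\ 0 < p <= m, P p & prank p = t].
Proof.
case/andP => t_gt0 t_le.
have exP : exists x, t <= prank x by exists m.
case: (ex_minnP exP) => x t_le_x x_min.
have x_gt0 : 0 < x by case: x t_le_x {x_min}; rewrite /prank /=; lia.
have hx : x = x.-1.+1 by rewrite prednK.
have lt_t : prank x.-1 < t by rewrite ltnNge; apply/negP => /x_min; lia.
have Px : P x.
  by apply: contraLR t_le_x; rewrite hx prankS => /negbTE ->; rewrite -ltnNge addn0.
exists x; split => //; last by move: t_le_x; rewrite hx prankS -hx Px; lia.
by rewrite x_gt0 x_min.
Qed.

End PositiveRank.

Lemma mem_downclosedE (T : finType) (s : seq T) (D : {set T}) : uniq s ->
    {subset D <= s} ->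
    (forall x y, x \in D -> y \in s -> index y s <= index x s -> y \in D) ->
  forall y, y \in s -> (y \in D) = (index y s < #|D|).
Proof.
move=> us Ds D_down y ys.
have card_take m : m <= size s -> #|[pred z | z \in take m s]| = m.
  by move=> m_le; rewrite (card_uniqP _) ?take_uniq // size_takel.
apply/idP/idP => [yD|].
  rewrite -(card_take (index y s).+1) ?index_mem // subset_leq_card //.
  apply/subsetP => z /[dup] /mem_take zs; rewrite inE in_take // ltnS.
  exact: D_down.
apply: contraTT => yD; rewrite -leqNgt -(card_take (index y s)) ?index_size //.
apply/subset_leq_card/subsetP => x xD; rewrite inE in_take ?Ds //.
by rewrite ltnNge; apply: contra yD => /(D_down x y xD ys).
Qed.

Section Tournament.
Variables (V : finType) (e : rel V).
Hypothesis irr : forall x, ~~ e x x.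
Hypothesis tot : forall x y, x != y -> e x y != e y x.

Lemma tour_asym x y : e x y -> ~~ e y x.
Proof.
case: (eqVneq x y) => [->|nxy]; first by rewrite (negbTE (irr y)).
by move: (tot nxy); case: (e x y); case: (e y x).
Qed.

Lemma tour_total x y : x != y -> ~~ e x y -> e y x.
Proof. by move=> /tot; case: (e x y); case: (e y x). Qed.

Lemma tour_neq x y : e x y -> x != y.
Proof. by apply: contraTneq => ->; apply: irr. Qed.

Definition cyclic3 x y z := [&& e x y, e y z & e z x].

Definition cyclic3_free (S : {set V}) :=
  forall x y z, x \in S -> y \in S -> z \in S -> ~~ cyclic3 x y z.

Lemma cyclic3_freeS (S T : {set V}) : T \subset S -> cyclic3_free S -> cyclic3_free T.
Proof. by move=> /subsetP sub h x y z /sub xS /sub yS /sub zS; apply: h. Qed.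

Lemma transitive_on_edgeE (S : {set V}) s : uniq s -> s =i S ->
    (forall x0 i j, i < j -> j < size s -> e (nth x0 s i) (nth x0 s j)) ->
  {in S &, forall x y, e x y = (index x s < index y s)}.
Proof.
move=> us hs hf x y; rewrite -!hs => xs ys.
case: (ltngtP (index x s) (index y s)) => h.
- by have := hf x _ _ h; rewrite index_mem !nth_index // => ->.
- by have := hf x _ _ h; rewrite index_mem !nth_index // => /(_ xs) /tour_asym /negbTE.
- have -> : x = y by rewrite -(nth_index x xs) h nth_index.
  exact/negbTE/irr.
Qed.

Lemma transitive_cyclic3_free S : transitive_on e S -> cyclic3_free S.
Proof.
case=> s [us hs hf] x y z xS yS zS; have edgeE := transitive_on_edgeE us hs hf.
by rewrite /cyclic3 !edgeE //; apply/negP; lia.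
Qed.

Lemma cyclic3_free_transitive S : cyclic3_free S -> transitive_on e S.
Proof.
move=> hS; pose le x y := (x == y) || e x y.
have le_total : total le.
  move=> x y; case: (eqVneq x y) => [->|nxy]; first by rewrite /le eqxx.
  rewrite /le (negbTE nxy) eq_sym (negbTE nxy) /=.
  by move: (tot nxy); case: (e x y); case: (e y x).
have le_trans : {in S & &, transitive le}.
  move=> y x z yS xS zS; rewrite /le.
  move=> /orP [/eqP->//|exy] /orP [/eqP<-|eyz]; first by rewrite exy orbT.
  case: (eqVneq x z) => [exz|nxz] /=; first by move: eyz; rewrite -exz => /tour_asym; rewrite exy.
  apply: contraT => nexz; have ezx := tour_total nxz nexz.
  by move: (hS _ _ _ xS yS zS); rewrite /cyclic3 exy eyz ezx.
set s := sort le (enum S).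
have us : uniq s by rewrite sort_uniq enum_uniq.
exists s; split => // [x|x0 i j lij ljs]; first by rewrite mem_sort mem_enum.
have /(pairwiseP x0) : pairwise le s.
  rewrite -(sorted_pairwise_in le_trans) ?sort_sorted //.
  by apply/allP => y; rewrite mem_sort mem_enum.
move=> /(_ i j); rewrite !inE => /(_ (ltn_trans lij ljs) ljs lij).
by rewrite /le nth_uniq ?(ltn_trans lij ljs) // (ltn_eqF lij).
Qed.

Definition is_sink (S : {set V}) z := forall y, y \in S -> y != z -> e y z.

Lemma cyclic3_free_sink S : S != set0 -> cyclic3_free S -> exists2 z, z \in S & is_sink S z.
Proof.
move=> /set0Pn [a aS] /cyclic3_free_transitive [s [us hs hf]].
have s_gt0 : 0 < size s by case: s hs {us hf} => // /(_ a); rewrite aS.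
exists (nth a s (size s).-1); first by rewrite -hs mem_nth // prednK.
move=> y yS ny; rewrite -hs in yS; rewrite -(nth_index a yS); apply: hf; last by rewrite prednK.
have : index y s < size s by rewrite index_mem.
suff : index y s != (size s).-1 by lia.
by apply: contraNneq ny => <-; rewrite nth_index.
Qed.

Definition out_nbhd (S : {set V}) x := [set y in S | e x y].
Definition in_nbhd (S : {set V}) x := [set y in S | e y x].

Definition d4_free (S : {set V}) :=
  forall w x y z, w \in S -> x \in S -> y \in S -> z \in S ->
    e w x -> e w y -> e w z -> ~~ cyclic3 x y z.

Lemma d4_freeS (S T : {set V}) : T \subset S -> d4_free S -> d4_free T.
Proof. by move=> /subsetP sub h w x y z /sub wS /sub xS /sub yS /sub zS; apply: h. Qed.

Lemma d4_freeT : d4_free [set: V] <-> ~ has_sub_iso d4 e.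
Proof.
split=> [hD [f [_ hf]]|nD w x y z _ _ _ _ ewx ewy ewz].
  have := hD (f (@Ordinal 4 3 isT)) (f (@Ordinal 4 0 isT)) (f (@Ordinal 4 1 isT))
    (f (@Ordinal 4 2 isT)).
  by rewrite !inE /cyclic3 !hf => /(_ isT isT isT isT isT isT isT).
apply/negP => /and3P [exy eyz ezx]; apply: nD.
pose f (i : 'I_4) := nth w [:: x; y; z; w] i.
have hf i j : e (f i) (f j) = d4 i j.
  have r1 := negbTE (tour_asym ewx); have r2 := negbTE (tour_asym ewy).
  have r3 := negbTE (tour_asym ewz); have r4 := negbTE (tour_asym exy).
  have r5 := negbTE (tour_asym eyz); have r6 := negbTE (tour_asym ezx).
  by case: i j => [[|[|[|[|i]]]] hi] [[|[|[|[|j]]]] hj] //=; rewrite /f /= ?(negbTE (irr _)).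
exists f; split => // i j fij; apply/eqP; apply: contraT => nij.
have : d4 i j || d4 j i by case: i j nij {fij} => [[|[|[|[|i]]]] hi] [[|[|[|[|j]]]] hj].
by rewrite -!hf fij (negbTE (irr _)).
Qed.

Lemma out_nbhd_cyclic3_free (S : {set V}) x : x \in S -> d4_free S -> cyclic3_free (out_nbhd S x).
Proof.
move=> xS hD a b c; rewrite !inE => /andP [aS xa] /andP [bS xb] /andP [cS xc].
exact: hD xS aS bS cS xa xb xc.
Qed.

Definition no_sink (S : {set V}) := forall z, z \in S -> exists2 w, w \in S & e z w.

Section CyclicTriangle.
Variables (S : {set V}) (a b c : V).
Hypotheses (hD : d4_free S) (aS : a \in S) (bS : b \in S) (cS : c \in S).
Hypothesis abc : cyclic3 a b c.

Definition common_out := [set u in S | [&& e a u, e b u & e c u]].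

(* Otherwise p dominates the cyclic triangle q -> u -> w -> q. *)
Lemma common_out_step p q u w : p \in S -> q \in S -> u \in S -> w \in S ->
  e p q -> e p u -> e q u -> e u w -> e p w -> e q w.
Proof.
move=> pS qS uS wS epq epu equ euw epw; apply: contraT => nqw.
have nqw' : q != w by apply: contraNneq (tour_asym euw) => <-.
by move: (hD pS qS uS wS epq epu epw); rewrite /cyclic3 equ euw (tour_total nqw' nqw).
Qed.

Lemma common_out_closed u w : u \in common_out -> w \in S -> e u w -> w \in common_out.
Proof.
rewrite !inE => /andP [uS /and3P [eau ebu ecu]] wS euw.
have /and3P [eab ebc eca] := abc.
have ab : e a w -> e b w := common_out_step aS bS uS wS eab eau ebu euw.
have bc : e b w -> e c w := common_out_step bS cS uS wS ebc ebu ecu euw.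
have ca : e c w -> e a w := common_out_step cS aS uS wS eca ecu eau euw.
have : e a w || e b w || e c w.
  apply: contraT => /norP [/norP [naw nbw] ncw].
  have aw : a != w by apply: contraNneq (tour_asym eau) => ->.
  have bw : b != w by apply: contraNneq (tour_asym ebu) => ->.
  have cw : c != w by apply: contraNneq (tour_asym ecu) => ->.
  have := hD wS aS bS cS (tour_total aw naw) (tour_total bw nbw) (tour_total cw ncw).
  by rewrite abc.
rewrite wS /= => /orP [/orP [haw|hbw]|hcw].
- by rewrite haw ab // bc // ab.
- by rewrite hbw bc // ca // bc.
- by rewrite hcw ca // ab // ca.
Qed.

End CyclicTriangle.

Lemma in_nbhd_cyclic3_free (S : {set V}) v : d4_free S -> no_sink S -> v \in S ->
  cyclic3_free (in_nbhd S v).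
Proof.
move=> hD hN vS a b c; rewrite !inE => /andP [aS eav] /andP [bS ebv] /andP [cS ecv].
apply/negP => abc.
have U_n0 : common_out S a b c != set0 by apply/set0Pn; exists v; rewrite inE vS eav ebv ecv.
have U_free : cyclic3_free (common_out S a b c).
  apply: cyclic3_freeS (out_nbhd_cyclic3_free aS hD).
  by apply/subsetP => u; rewrite !inE => /andP [-> /and3P []].
have [z zU z_sink] := cyclic3_free_sink U_n0 U_free.
have zS : z \in S by move: zU; rewrite inE => /andP [].
have [w wS ezw] := hN z zS.
have wU := common_out_closed hD aS bS cS abc zU wS ezw.
by move: (z_sink w wU); rewrite eq_sym (tour_neq ezw) => /(_ isT) /tour_asym; rewrite ezw.
Qed.

Section Staircase.
Variables (S : {set V}) (x0 : V).
Hypotheses (x0S : x0 \in S) (hD : d4_free S) (hN : no_sink S).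

Local Notation C := (out_nbhd S x0).
Local Notation B := (in_nbhd S x0).

Variable s : seq V.
Hypotheses (us : uniq s) (hs : s =i B).
Hypothesis hf : forall x i j, i < j -> j < size s -> e (nth x s i) (nth x s j).

Lemma out_in_neq c b : c \in C -> b \in B -> c != b.
Proof.
by rewrite !inE => /andP [_ ec] /andP [_ eb]; apply: contraTneq ec => ->; apply: tour_asym.
Qed.

Lemma out_beats_in_down c b b' : c \in C -> b \in B -> b' \in B ->
  e c b' -> e b b' -> e c b.
Proof.
move=> cC bB b'B ecb' ebb'; apply: contraT => ncb.
have ebc := tour_total (out_in_neq cC bB) ncb.
move: cC bB b'B; rewrite !inE => /andP [cS e0c] /andP [bS eb0] /andP [b'S eb'0].
by move: (hD bS x0S cS b'S eb0 ebc ebb'); rewrite /cyclic3 e0c ecb' eb'0.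
Qed.

Definition beaten c := #|[set b in B | e c b]|.

Lemma beaten_le c : beaten c <= size s.
Proof.
rewrite -(card_uniqP us) (eq_card hs) subset_leq_card //.
by apply/subsetP => b; rewrite inE => /andP [].
Qed.

Lemma out_in_edgeE c b : c \in C -> b \in B -> e c b = (index b s < beaten c).
Proof.
move=> cC bB; have bs : b \in s by rewrite hs.
have edgeE := transitive_on_edgeE us hs hf.
rewrite -(mem_downclosedE us) //; first by rewrite inE bB.
  by move=> y; rewrite inE hs => /andP [].
move=> y y'; rewrite inE => /andP [yB ecy] y's; have y'B : y' \in B by rewrite -hs.
have ys : y \in s by rewrite hs.
rewrite inE y'B leq_eqVlt => /orP [/eqP /(index_inj y' y's ys) ->|lt] //.
by apply: (out_beats_in_down cC y'B yB ecy); rewrite edgeE.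
Qed.

Lemma beaten_mono c c' : c \in C -> c' \in C -> e c c' -> beaten c <= beaten c'.
Proof.
move=> cC c'C ecc'; apply/subset_leq_card/subsetP => b; rewrite inE => /andP [bB ecb].
rewrite inE bB /=; apply: contraT => nc'b.
have ebc' := tour_total (out_in_neq c'C bB) nc'b.
move: cC c'C bB; rewrite !inE => /andP [cS e0c] /andP [c'S e0c'] /andP [bS eb0].
have := in_nbhd_cyclic3_free hD hN c'S (x := x0) (y := c) (z := b).
by rewrite !inE x0S cS bS e0c' ecc' ebc' /cyclic3 e0c ecb eb0 => /(_ isT isT isT).
Qed.

Definition beaten_val x := [exists c in C, beaten c == x].

(* The k positive values of [beaten] cut the order s of B into k+1 intervals:
   [in_part b] is the interval of b, [out_part c] the rank of [beaten c]
   among these values. *)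
Definition ncuts := prank beaten_val (size s).
Definition out_part c := prank beaten_val (beaten c).
Definition in_part b := prank beaten_val (index b s).

Lemma out_part_le c : out_part c <= ncuts.
Proof. exact/prank_mono/beaten_le. Qed.

Lemma in_part_le b : in_part b <= ncuts.
Proof. exact/prank_mono/index_size. Qed.

Lemma out_in_edge_part c b : c \in C -> b \in B -> e c b = (in_part b < out_part c).
Proof.
move=> cC bB; rewrite out_in_edgeE // /out_part /in_part.
case: (posnP (beaten c)) => [->|c_gt0]; first by rewrite !ltn0.
by apply: prank_ltE => //; apply/existsP; exists c; rewrite cC eqxx.
Qed.

Lemma out_part_mono c c' : c \in C -> c' \in C -> e c c' -> out_part c <= out_part c'.
Proof. by move=> cC c'C ecc'; apply/prank_mono/beaten_mono. Qed.

Lemma in_part_mono b b' : b \in B -> b' \in B -> e b b' -> in_part b <= in_part b'.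
Proof. by move=> bB b'B; rewrite (transitive_on_edgeE us hs hf) // => /ltnW; apply: prank_mono. Qed.

Lemma out_part_surj t : 0 < t <= ncuts -> exists2 c, c \in C & out_part c = t.
Proof.
move=> /prank_surj [p [_ /existsP [c /andP [cC /eqP cp]] pt]].
by exists c; rewrite // /out_part cp.
Qed.

Lemma in_part_surj t : t < ncuts -> exists2 b, b \in B & in_part b = t.
Proof.
move=> t_lt; have /prank_surj [p [/andP [p_gt0 p_le] Pp pt]] : 0 < t.+1 <= ncuts by [].
have lt_p : p.-1 < size s by rewrite prednK.
exists (nth x0 s p.-1); first by rewrite -hs mem_nth.
move: pt; rewrite /in_part index_uniq // -{1}(prednK p_gt0) prankS prednK // Pp; lia.
Qed.

Lemma vertex_cases v : v \in S -> [\/ v = x0, v \in C | v \in B].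
Proof.
move=> vS; case: (eqVneq v x0) => [->|nv]; first by constructor 1.
case: (boolP (e x0 v)) => h; first by constructor 2; rewrite inE vS h.
by constructor 3; rewrite inE vS (tour_total _ h) // eq_sym.
Qed.

Lemma x0_out : x0 \notin C. Proof. by rewrite inE (negbTE (irr x0)) andbF. Qed.
Lemma x0_in : x0 \notin B. Proof. by rewrite inE (negbTE (irr x0)) andbF. Qed.
Lemma out_neq_x0 c : c \in C -> (c == x0) = false.
Proof. by apply: contraTF => /eqP ->; apply: x0_out. Qed.

Lemma out_notin_in c : c \in C -> c \notin B.
Proof. by move=> cC; apply/negP => /(out_in_neq cC); rewrite eqxx. Qed.

(* C fills parts 0..k and B parts k+1..2k, except that the last interval of
   B joins x0 in part 0. *)
Definition part v := if v == x0 then 0 else if v \in C then out_part v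
  else if in_part v == ncuts then 0 else ncuts + 1 + in_part v.

Lemma part_x0 : part x0 = 0. Proof. by rewrite /part eqxx. Qed.

Lemma part_out c : c \in C -> part c = out_part c.
Proof. by move=> cC; rewrite /part out_neq_x0 // cC. Qed.

Lemma part_in b : b \in B -> part b = if in_part b == ncuts then 0 else ncuts + 1 + in_part b.
Proof.
move=> bB; rewrite /part; case: eqP => [bx0|_]; first by move: bB; rewrite bx0 (negbTE x0_in).
by rewrite ifF //; apply: contraTF bB => /out_notin_in.
Qed.

Lemma part_le v : part v <= ncuts.*2.
Proof.
rewrite /part; have := out_part_le v; have := in_part_le v.
case: eqP => _; first lia; case: (v \in C); first lia.
case: eqP; lia.
Qed.

Ltac case_ifs := repeat (case: ifP => [/eqP ?|/negbT/eqP ?]).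

Lemma part_edge x y : x \in S -> y \in S -> part x != part y -> e x y ->
  tn_nat ncuts (part x) (part y).
Proof.
move=> xS yS; rewrite /tn_nat.
have x0_in_edge b : b \in B -> e x0 b = false.
  by rewrite inE => /andP [_ /tour_asym /negbTE].
have out_x0_edge c : c \in C -> e c x0 = false.
  by rewrite inE => /andP [_ /tour_asym /negbTE].
have := out_part_le x; have := out_part_le y; have := in_part_le x; have := in_part_le y.
case: (vertex_cases xS) => [->|xC|xB]; case: (vertex_cases yS) => [->|yC|yB].
- by rewrite eqxx.
- by rewrite part_x0 part_out //; lia.
- by rewrite x0_in_edge.
- by rewrite out_x0_edge.
- by rewrite !part_out // => ? ? ? ? ? /(out_part_mono xC yC); lia.
- by rewrite part_out // part_in // out_in_edge_part //; case_ifs; lia.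
- by rewrite part_in // part_x0; case_ifs; lia.
- rewrite part_in // part_out // => ? ? ? ? + /tour_asym.
  by rewrite out_in_edge_part // -leqNgt; case_ifs; lia.
- by rewrite !part_in // => ? ? ? ? + /(in_part_mono xB yB); case_ifs; lia.
Qed.

(* Inside a part, edges lead from B to x0 to C. *)
Definition layer v := if v \in B then 0 else if v == x0 then 1 else 2.

Lemma layer_le2 v : layer v <= 2.
Proof. by rewrite /layer; case: (_ \in _) => //; case: (_ == _). Qed.

Lemma layer0 v : layer v = 0 -> v \in B.
Proof. by rewrite /layer; case: (v \in B) => //; case: (v == x0). Qed.

Lemma layer1 v : layer v = 1 -> v = x0.
Proof. by rewrite /layer; case: (v \in B) => //; case: eqP. Qed.

Lemma layer2 v : v \in S -> layer v = 2 -> v \in C.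
Proof. by case/vertex_cases => [->|//|vB]; rewrite /layer ?vB // (negbTE x0_in) eqxx. Qed.

Lemma layer_mono x y : x \in S -> y \in S -> part x = part y -> e x y -> layer x <= layer y.
Proof.
rewrite /layer => xS yS.
case: (vertex_cases xS) => [->|xC|xB]; last by rewrite xB.
  rewrite (negbTE x0_in) eqxx; case: (vertex_cases yS) => [->|yC|yB].
  - by rewrite (negbTE x0_in) eqxx.
  - by rewrite (negbTE (out_notin_in yC)) out_neq_x0.
  - by rewrite inE in yB; case/andP: yB => _ /tour_asym /negbTE ->.
rewrite (negbTE (out_notin_in xC)) out_neq_x0 //.
case: (vertex_cases yS) => [->|yC|yB].
- by move: xC; rewrite inE => /andP [_ /tour_asym /negbTE ->].
- by rewrite (negbTE (out_notin_in yC)) out_neq_x0.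
- rewrite part_out // part_in // out_in_edge_part // => pxy.
  by have := out_part_le x; move: pxy; case_ifs; lia.
Qed.

Lemma part_class_cyclic3_free t : cyclic3_free [set v in S | part v == t].
Proof.
move=> x y z; rewrite !inE => /andP [xS /eqP px] /andP [yS /eqP py] /andP [zS /eqP pz].
apply/negP => /and3P [exy eyz ezx].
have lxy := layer_mono xS yS (etrans px (esym py)) exy.
have lyz := layer_mono yS zS (etrans py (esym pz)) eyz.
have lzx := layer_mono zS xS (etrans pz (esym px)) ezx.
have := layer_le2 x; case: (ltngtP (layer x) 1) => lx l2.
- have [lx0 ly0 lz0] : [/\ layer x = 0, layer y = 0 & layer z = 0] by split; lia.
  have := in_nbhd_cyclic3_free hD hN x0S (layer0 lx0) (layer0 ly0) (layer0 lz0).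
  by rewrite /cyclic3 exy eyz ezx.
- have [lx2 ly2 lz2] : [/\ layer x = 2, layer y = 2 & layer z = 2] by split; lia.
  have := out_nbhd_cyclic3_free x0S hD (layer2 xS lx2) (layer2 yS ly2) (layer2 zS lz2).
  by rewrite /cyclic3 exy eyz ezx.
- have ly1 : layer y = 1 by lia.
  by move: exy; rewrite (layer1 lx) (layer1 ly1) (negbTE (irr x0)).
Qed.

Lemma part_surj t : t <= ncuts.*2 -> exists2 v, v \in S & part v = t.
Proof.
move=> t_le; case: (posnP t) => [->|t_gt0]; first by exists x0; rewrite ?part_x0.
case: (leqP t ncuts) => t_ncuts.
  have [c cC ct] : exists2 c, c \in C & out_part c = t by apply: out_part_surj; rewrite t_gt0.
  by exists c; [case/setIdP: cC | rewrite part_out].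
have [b bB bt] : exists2 b, b \in B & in_part b = t - ncuts - 1 by apply: in_part_surj; lia.
exists b; first by case/setIdP: bB.
by rewrite part_in // bt; case: eqP; lia.
Qed.

Lemma part_edgeE x y : x \in S -> y \in S -> part x != part y ->
  e x y = tn_nat ncuts (part x) (part y).
Proof.
move=> xS yS pxy; case: (boolP (e x y)) => [exy|nexy]; first by rewrite part_edge.
have /tour_total/(_ nexy) eyx : x != y by apply: contraNneq pxy => ->.
by have := part_edge yS xS; rewrite eq_sym => /(_ pxy eyx) /tn_nat_asym /negbTE ->.
Qed.

Lemma Tn_subst_parts : Tn_subst e S ncuts.*2.+1.
Proof.
have partK v : (inord (part v) : 'I_ncuts.*2.+1) = part v :> nat.
  by rewrite inordK // ltnS part_le.
exists (fun v => inord (part v)); split.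
- move=> i; have [v vS vi] := part_surj (ltn_ord i).
  by exists v => //; apply: val_inj; rewrite /= partK.
- move=> i; apply/cyclic3_free_transitive/(cyclic3_freeS _ (@part_class_cyclic3_free i)).
  by apply/subsetP => v; rewrite !inE => /andP [-> /eqP <-]; rewrite partK eqxx.
move=> x y xS yS hne; rewrite tn_odd /= ?odd_double // !partK uphalf_double part_edgeE //.
by apply: contraNneq hne => ->.
Qed.

End Staircase.

Definition Tn_form (S : {set V}) := exists n, [/\ odd n, 1 <= n & Tn_subst e S n].

Lemma Tn_form_no_sink S : S != set0 -> d4_free S -> no_sink S -> Tn_form S.
Proof.
move=> /set0Pn [x0 x0S] hD hN.
have [s [us hs hf]] := cyclic3_free_transitive (in_nbhd_cyclic3_free hD hN x0S).
exists (ncuts S x0 s).*2.+1; split; rewrite /= ?odd_double //.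
exact: Tn_subst_parts.
Qed.

Definition Tn_sink_form (S : {set V}) := exists n (A B : {set V}),
  [/\ odd n, 1 <= n, A :&: B = set0, A :|: B = S &
   [/\ B != set0, forall x y, x \in A -> y \in B -> e x y,
       Tn_subst e A n & transitive_on e B]].

Lemma sinkP (S : {set V}) : (exists2 v, v \in S & is_sink S v) \/ no_sink S.
Proof.
case: (boolP [exists v in S, [forall u in S, (u != v) ==> e u v]]) => [|no_sink_S].
  move=> /existsP [v /andP [vS /forallP v_sink]]; left; exists v => // u uS.
  by move: (v_sink u); rewrite uS /= => /implyP.
right=> z zS; move: no_sink_S => /existsPn /(_ z); rewrite zS /= => /forallPn [u].
rewrite !negb_imply => /and3P [uS nuz neuz].
by exists u => //; apply: tour_total => //; rewrite eq_sym.
Qed.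

Lemma sink_no_out (S : {set V}) v u : is_sink S v -> u \in S -> ~~ e v u.
Proof.
move=> v_sink uS; case: (eqVneq u v) => [->|nuv]; first exact: irr.
exact/tour_asym/v_sink.
Qed.

Lemma cyclic3_free_setU1_sink (S B : {set V}) v : is_sink S v -> v \in S -> B \subset S ->
  cyclic3_free B -> cyclic3_free (v |: B).
Proof.
move=> v_sink vS /subsetP BS B_free x y z.
have inS u : u \in v |: B -> u \in S by case/setU1P => [->|/BS].
move=> xB yB zB; apply/negP => /and3P [exy eyz ezx].
have no_out u w : u \in v |: B -> w \in v |: B -> e u w -> u \in B.
  move=> uB wB euw; case/setU1P: uB => // uv.
  by move: euw; rewrite uv (negbTE (sink_no_out v_sink (inS w wB))).
have := B_free x y z (no_out _ _ xB yB exy) (no_out _ _ yB zB eyz) (no_out _ _ zB xB ezx).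
by rewrite /cyclic3 exy eyz ezx.
Qed.

Lemma Tn_form_transitive S : S != set0 -> transitive_on e S -> Tn_form S.
Proof.
move=> /set0Pn [v vS] S_tr; exists 1; split => //; exists (fun _ => ord0); split.
- by move=> i; exists v; rewrite ?(ord1 i).
- by move=> i; congr (transitive_on e _): S_tr; apply/setP => x; rewrite inE (ord1 i) eqxx andbT.
- by move=> x y _ _; rewrite eqxx.
Qed.

Lemma Tn_sink_form_add_sink (S : {set V}) v (A B : {set V}) n : v \in S -> is_sink S v ->
    A :&: B = set0 -> A :|: B = S :\ v -> (forall x y, x \in A -> y \in B -> e x y) ->
    odd n -> 1 <= n -> Tn_subst e A n -> transitive_on e B ->
  Tn_sink_form S.
Proof.
move=> vS v_sink AB0 ABS AB_edge odd_n n_ge1 A_Tn B_tr.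
have AS : A \subset S :\ v by rewrite -ABS subsetUl.
have vA : v \notin A by apply: contraTN AS => vA; apply/subsetPn; exists v; rewrite ?setD11.
exists n, A, (v |: B); split => //.
- rewrite setIUr AB0 setU0; apply/setP => u; rewrite !inE andbC.
  by case: eqP => // ->; rewrite (negbTE vA).
- by rewrite setUCA ABS setD1K.
split => //.
- by apply/set0Pn; exists v; rewrite setU11.
- move=> x y xA /setU1P [->|]; last exact: AB_edge.
  by move/subsetP/(_ x xA): AS; rewrite !inE => /andP [xv xS]; apply: v_sink.
apply/cyclic3_free_transitive/(cyclic3_free_setU1_sink v_sink vS).
  by apply: subset_trans (subsetDl S [set v]); rewrite -ABS subsetUr.
exact: transitive_cyclic3_free.
Qed.

Lemma d4_free_structure N (S : {set V}) : #|S| <= N -> S != set0 -> d4_free S ->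
  Tn_form S \/ Tn_sink_form S.
Proof.
elim: N S => [|N IH] S S_le S_n0 hD; first by move: S_n0; rewrite -card_gt0; lia.
case: (sinkP S) => [[v vS v_sink]|hN]; last by left; apply: Tn_form_no_sink.
have v_free u w : u \in S -> w \in S -> ~~ cyclic3 v u w.
  by move=> uS wS; rewrite /cyclic3 (negbTE (sink_no_out v_sink uS)).
case: (eqVneq (S :\ v) set0) => [Sv0|Sv_n0].
  left; apply: Tn_form_transitive S_n0 (cyclic3_free_transitive _) => x y z xS yS zS.
  have Sv u : u \in S -> u = v.
    by move=> uS; apply/eqP; apply: contraT => uv; rewrite -(in_set0 u) -Sv0 !inE uv.
  by rewrite (Sv x xS) v_free.
have Sv_le : #|S :\ v| <= N by move: S_le; rewrite (cardsD1 v S) vS.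
right; case: (IH _ Sv_le Sv_n0 (d4_freeS (subsetDl S [set v]) hD)).
  case=> n [odd_n n_ge1 Sv_Tn].
  apply: (Tn_sink_form_add_sink (B := set0) vS v_sink _ _ _ odd_n n_ge1 Sv_Tn) => //.
  - by rewrite setI0.
  - by rewrite setU0.
  - by move=> x y _; rewrite inE.
  - by apply: cyclic3_free_transitive => x; rewrite inE.
case=> n [A [B [odd_n n_ge1 AB0 ABS [_ AB_edge A_Tn B_tr]]]].
exact: (Tn_sink_form_add_sink vS v_sink AB0 ABS AB_edge odd_n n_ge1 A_Tn B_tr).
Qed.

Lemma Tn_subst_d4_free (A : {set V}) n : odd n -> Tn_subst e A n -> d4_free A.
Proof.
move=> odd_n [f [_ f_tr f_edge]] d x y z dA xA yA zA edx edy edz.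
pose dist u := cdist n (f d) (f u).
have dist_le u : u \in A -> e d u -> dist u <= n./2.
  move=> uA edu; rewrite /dist; case: (eqVneq (f d) (f u)) => [->|fdu].
    by rewrite /cdist leqnn subnn.
  by apply: cdist_le_tn; rewrite // -tn_odd // -f_edge.
have dist_mono u w : u \in A -> w \in A -> e d u -> e d w -> e u w -> dist u <= dist w.
  move=> uA wA edu edw euw; rewrite /dist; case: (eqVneq (f u) (f w)) => [->|fuw] //.
  by apply: cdist_mono_tn; rewrite ?dist_le // -tn_odd // -f_edge.
apply/negP => /and3P [exy eyz ezx].
have dxy := dist_mono _ _ xA yA edx edy exy; have dyz := dist_mono _ _ yA zA edy edz eyz.
have dzx := dist_mono _ _ zA xA edz edx ezx.
have f_eq u w : dist u = dist w -> f u = f w.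
  by move/(cdist_inj (ltn_ord _) (ltn_ord _) (ltn_ord _)) => /val_inj.
have fxy : f x = f y by apply: f_eq; lia.
have fxz : f x = f z by apply: f_eq; lia.
have inP u : u \in A -> f u = f x -> u \in [set w in A | f w == f x].
  by move=> uA fu; rewrite inE uA fu eqxx.
have := transitive_cyclic3_free (f_tr (f x))
  (inP x xA erefl) (inP y yA (esym fxy)) (inP z zA (esym fxz)).
by rewrite /cyclic3 exy eyz ezx.
Qed.

Lemma Tn_sink_form_d4_free S : Tn_sink_form S -> d4_free S.
Proof.
case=> n [A [B [odd_n _ _ ABS [_ AB_edge A_Tn B_tr]]]] d x y z dS xS yS zS edx edy edz.
have inAB u : u \in S -> (u \in A) || (u \in B) by rewrite -ABS inE.
have inA u w : u \in S -> w \in A -> e u w -> u \in A.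
  move=> uS wA euw; case/orP: (inAB u uS) => // uB.
  by move: (tour_asym (AB_edge _ _ wA uB)); rewrite euw.
have inB u w : u \in B -> w \in S -> e u w -> w \in B.
  move=> uB wS euw; case/orP: (inAB w wS) => // wA.
  by move: (tour_asym (AB_edge _ _ wA uB)); rewrite euw.
apply/negP => /and3P [exy eyz ezx].
case/orP: (inAB x xS) => [xA|xB].
  have zA := inA _ _ zS xA ezx; have yA := inA _ _ yS zA eyz; have dA := inA _ _ dS xA edx.
  by move: (Tn_subst_d4_free odd_n A_Tn dA xA yA zA edx edy edz); rewrite /cyclic3 exy eyz ezx.
have yB := inB _ _ xB yS exy; have zB := inB _ _ yB zS eyz.
by move: (transitive_cyclic3_free B_tr xB yB zB); rewrite /cyclic3 exy eyz ezx.
Qed.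

End Tournament.

Theorem corollary3p9 (V : finType) (e : rel V) (hT : is_tournament e) :
  ~ has_sub_iso d4 e <->
  (exists n : nat, [/\ odd n, 1 <= n & Tn_subst e [set: V] n]) \/
  (exists (n : nat) (A B : {set V}),
     [/\ odd n, 1 <= n, A :&: B = set0, A :|: B = [set: V] &
         [/\ B != set0, forall x y, x \in A -> y \in B -> e x y,
             Tn_subst e A n & transitive_on e B]]).
Proof.
case: hT => V_gt0 [irr tot]; rewrite -(d4_freeT irr tot); split => [hD|].
  by apply: (d4_free_structure irr tot (leqnn _)) => //; rewrite -card_gt0 cardsT.
case=> [[n [odd_n _ V_Tn]]|V_Tn_sink].
  exact: (Tn_subst_d4_free irr tot odd_n V_Tn).
exact: (Tn_sink_form_d4_free irr tot V_Tn_sink).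
Qed.
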